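(* Let $k\in\hat I$, $u\in\mathbb C^\times$ and let $\lambda$ be a partition. In the Fock module $\mathcal F^{(k)}(u)$, for every $i\in\hat I$ the series $K_i^\pm(z)$ act on $|\lambda\rangle$ by the expansions in $z^{\mp1}$ of $$\prod_{(x,y)\in CV_i^{(k)}(\lambda)}\psi(q_3^xq_1^yq_2u/z)\prod_{(x,y)\in CC_i^{(k)}(\lambda)}\psi(q_3^xq_1^yq_2^2u/z)^{-1}.$$ In particular, $K_i|\lambda\rangle=q^{|CV_i^{(k)}(\lambda)|-|CC_i^{(k)}(\lambda)|}|\lambda\rangle$.
   Context: Fix $n\ge3$ and let $\hat I=\{0,\dots,n-1\}$, with indices mod $n$; $a\equiv b$ means $n\mid a-b$. Let $q,d\in\mathbb C^\times$ and $q_1=d/q$, $q_2=q^2$, $q_3=1/(dq)$, assumed generic: $q_1^aq_2^bq_3^c=1$ ($a,b,c\in\mathbb Z$) only if $a=b=c$. Let $\psi(z)=\frac{q-q^{-1}z}{1-z}$. The series $K_i^\pm(z)=K_i^{\pm1}\exp(\pm(q-q^{-1})\sum_{m\ge1}H_{i,\pm m}z^{\mp m})$ are Cartan generating series of the quantum toroidal algebra $\mathcal E_n$. Only their action on the Fock module matters here, so no further structure of $\mathcal E_n$ is needed. The Fock module $\mathcal F^{(k)}(u)$ has basis $|\lambda\rangle$ indexed by partitions. On it, $K_i^\pm(z)$ acts diagonally with eigenvalue on $|\lambda\rangle$ given by the expansion in $z^{\mp1}$ of $$\prod_{s\ge1,\ \lambda_s+i\equiv s+k}\psi(q_1^{\lambda_s-1}q_3^{s-1}u/z)\prod_{s\ge1,\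 \lambda_s+i+1\equiv s+k}\psi(q_1^{\lambda_s-1}q_3^{s-2}u/z)^{-1}.$$ The product is truncated at any $r$ with $\lambda_r=0$ and $i\equiv r+k$; the factors with $s\ge r$ multiply to $1$. Corners: let $\lambda'$ be the conjugate partition, $\lambda'_y=|\{x:\lambda_x\ge y\}|$. - A pair $(x,y)\in\mathbb Z_{\ge1}^2$ is a convex corner of $\lambda$ if $\lambda'_{y+1}<\lambda'_y=x$. - It is a concave corner if $\lambda'_y=x-1$ and either $y=1$ or $\lambda'_{y-1}>x-1$. Let $CV_i^{(k)}(\lambda)$ (resp. $CC_i^{(k)}(\lambda)$) be the set of convex (resp. concave) corners $(x,y)$ with $k+x-y\equiv i$; this is the set of corners of color $i$. *)

From HB Require Import structures.
From mathcomp Require Import all_boot all_order all_algebra zify.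
From mathcomp Require Export reals complex.
Set Implicit Arguments.
Unset Strict Implicit.
Unset Printing Implicit Defensive.
Import Order.TTheory GRing.Theory Num.Theory.
Local Open Scope ring_scope.

Section Params.
Variable F : fieldType.

Definition psi (q w : F) : F := (q - q^-1 * w) / (1 - w).

Definition q1 (q d : F) : F := d / q.
Definition q2 (q : F) : F := q ^+ 2.
Definition q3 (q d : F) : F := (d * q)^-1.

Definition generic_params (q d : F) : Prop :=
  forall a b c : int, (q1 q d) ^ a * (q2 q) ^ b * (q3 q d) ^ c = 1 -> a = b /\ b = c.
End Params.

Definition is_partition (lam : seq nat) : bool :=
  sorted geq lam && all (fun p => 0 < p)%N lam.

(* λ_s for s >= 1 (equal to 0 for s > length) *)
Definition part (lam : seq nat) (s : nat) : nat := nth 0%N lam s.-1.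

Definition conj_part (lam : seq nat) (y : nat) : nat := count (fun p => y <= p)%N lam.

Definition convex_corner (lam : seq nat) (x y : nat) : bool :=
  [&& (0 < x)%N, (0 < y)%N, (conj_part lam y.+1 < conj_part lam y)%N
    & conj_part lam y == x].

Definition concave_corner (lam : seq nat) (x y : nat) : bool :=
  [&& (0 < x)%N, (0 < y)%N, conj_part lam y == x.-1
    & (y == 1%N) || (x.-1 < conj_part lam y.-1)%N].

Definition has_color (n k i x y : nat) : bool := (k + x == i + y %[mod n])%N.

(* A finite box containing every corner (x <= length+1, y <= |λ|+1). *)
Definition corner_box (lam : seq nat) : seq (nat * nat) :=
  let B := (size lam + sumn lam + 1)%N in
  [seq (x, y) | x <- iota 1 B, y <- iota 1 B].

(* CV_i^{(k)}(λ) and CC_i^{(k)}(λ), as duplicate-free lists *)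
Definition CV (n k i : nat) (lam : seq nat) : seq (nat * nat) :=
  [seq p <- corner_box lam | convex_corner lam p.1 p.2 && has_color n k i p.1 p.2].
Definition CC (n k i : nat) (lam : seq nat) : seq (nat * nat) :=
  [seq p <- corner_box lam | concave_corner lam p.1 p.2 && has_color n k i p.1 p.2].

Section Eigen.
Variable F : fieldType.

(* Eigenvalue of K_i^±(z) on |λ> in F^{(k)}(u) as given by the definition of the
   Fock module, as a function of w := u/z, truncated at r (with λ_r = 0, i ≡ r+k). *)
Definition fock_K (q d : F) (n k i : nat) (lam : seq nat) (r : nat) (w : F) : F :=
  (\prod_(1 <= s < r | (part lam s + i == s + k %[mod n])%N)
      psi q ((q1 q d) ^ ((part lam s)%:Z - 1) * (q3 q d) ^ (s%:Z - 1) * w))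
  * (\prod_(1 <= s < r | (part lam s + i + 1 == s + k %[mod n])%N)
      (psi q ((q1 q d) ^ ((part lam s)%:Z - 1) * (q3 q d) ^ (s%:Z - 2) * w))^-1).

Definition corner_K (q d : F) (n k i : nat) (lam : seq nat) (w : F) : F :=
  (\prod_(p <- CV n k i lam)
      psi q ((q3 q d) ^+ p.1 * (q1 q d) ^+ p.2 * q2 q * w))
  * (\prod_(p <- CC n k i lam)
      (psi q ((q3 q d) ^+ p.1 * (q1 q d) ^+ p.2 * (q2 q) ^+ 2 * w))^-1).
End Eigen.

(* Sanity lemmas: the finite box contains all corners, so CV/CC are exactly the corner sets. *)
Lemma count_le_sumn (lam : seq nat) y : (0 < y)%N -> (0 < count (fun p => y <= p)%N lam)%N -> (y <= sumn lam)%N.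
Proof.
move=> y0; elim: lam => //= a l IH.
case: (boolP (y <= a)%N) => /= h; first by move=> _; lia.
move/IH; lia.
Qed.
Lemma in_corner_box lam x y :
  ((x, y) \in corner_box lam) = [&& 0 < x, x <= size lam + sumn lam + 1, 0 < y & y <= size lam + sumn lam + 1]%N.
Proof.
rewrite /corner_box; apply/allpairsP/idP.
  case=> -[a b] /= [ha hb [-> ->]]; move: ha hb; rewrite !mem_iota; lia.
move=> h; exists (x, y) => /=; rewrite !mem_iota; split => //; lia.
Qed.
Lemma mem_CV n k i lam x y :
  ((x, y) \in CV n k i lam) = convex_corner lam x y && has_color n k i x y.
Proof.
rewrite /CV mem_filter /= in_corner_box.
case H: (convex_corner lam x y) => //=.
move: H => /and4P [x0 y0 _ /eqP hx].
have hc : (conj_part lam y <= size lam)%N by exact: count_size.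
have hs : (y <= sumn lam)%N.
  by apply: count_le_sumn => //; rewrite -[count _ _]/(conj_part lam y) hx.
case: has_color; rewrite ?andbT ?andbF // x0 y0 /=; apply/andP; split; lia.
Qed.
Lemma mem_CC n k i lam x y :
  ((x, y) \in CC n k i lam) = concave_corner lam x y && has_color n k i x y.
Proof.
rewrite /CC mem_filter /= in_corner_box.
case H: (concave_corner lam x y) => //=.
move: H => /and4P [x0 y0 /eqP hx hy].
have hc : (conj_part lam y <= size lam)%N by exact: count_size.
have hs : (y <= (sumn lam).+1)%N.
  case/orP: hy => [/eqP -> //| h].
  have : (y.-1 <= sumn lam)%N; last by lia.
  case: (posnP y.-1) => [-> //| yp]; apply: count_le_sumn => //; rewrite -[count _ _]/(conj_part lam y.-1); lia.
case: has_color; rewrite ?andbT ?andbF // x0 y0 /=; apply/andP; split; lia.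
Qed.

From mathcomp Require Import all_boot all_order all_algebra zify.
From mathcomp.algebra_tactics Require Import ring.
From mathcomp Require Import reals complex.
Import Order.TTheory GRing.Theory Num.Theory.
Set Implicit Arguments.
Unset Strict Implicit.
Unset Printing Implicit Defensive.

(** The corners of [λ] of a given color sit on the rows of [λ]: row [x] carries the
    convex corner [(x, λ_x)] when [λ_(x+1) < λ_x] and the concave corner [(x, λ_x + 1)] when
    [x = 1] or [λ_x < λ_(x-1)], and the color conditions of the two products in the Fock
    eigenvalue are exactly the colors of these two boxes.  The corner factors of the corner
    formula are, after rewriting [q2 = q1^-1 q3^-1], the factors of those rows.  The remaining
    factors telescope: when [λ_(s+1) = λ_s], the numerator factor of row [s] and the
    denominator factor of row [s + 1] have the same argument and the same color condition,
    and the last row before the truncation point carries no factor.  At [u/z = 0] every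
    [psi] equals [q], which gives the value of [K_i]. *)

Lemma eq_big_nat_cond (R : Type) (idx : R) (op : R -> R -> R) m n
    (P1 P2 : pred nat) (F1 F2 : nat -> R) :
    (forall s, (m <= s < n)%N -> P1 s = P2 s) ->
    (forall s, (m <= s < n)%N -> P1 s -> F1 s = F2 s) ->
  \big[op/idx]_(m <= s < n | P1 s) F1 s = \big[op/idx]_(m <= s < n | P2 s) F2 s.
Proof.
move=> eqP12 eqF12; rewrite big_nat_cond [RHS]big_nat_cond.
apply: eq_big => [s | s /andP[range P1s]]; last exact: eqF12.
by case: (boolP (m <= s < n)%N) => // /eqP12.
Qed.

Lemma big_nat_cond_bound (R : Type) (idx : R) (op : R -> R -> R) m n1 n2
    (P : pred nat) (G : nat -> R) :
    (forall s, P s -> (s < n1) && (s < n2))%N ->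
  \big[op/idx]_(m <= s < n1 | P s) G s = \big[op/idx]_(m <= s < n2 | P s) G s.
Proof.
wlog n12 : n1 n2 / (n1 <= n2)%N => [wlog_n12 P_bound|P_bound].
  have [n12|/ltnW n21] := leqP n1 n2; first exact: wlog_n12.
  by rewrite (wlog_n12 _ _ n21) // => s /P_bound; rewrite andbC.
rewrite (big_nat_widen _ _ _ _ _ n12); apply: eq_bigl => s.
by case Ps: (P s); rewrite //= (andP (P_bound s Ps)).1.
Qed.

Lemma prodr_const_seq (R : pzSemiRingType) (I : Type) (s : seq I) (x : R) :
  (\prod_(i <- s) x = x ^+ size s)%R.
Proof. by rewrite big_const_seq count_predT -Monoid.iteropE. Qed.

Lemma leq_conj_part lam x y : is_partition lam -> (0 < x)%N -> (0 < y)%N ->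
  (x <= conj_part lam y)%N = (y <= part lam x)%N.
Proof.
rewrite /is_partition /conj_part /part => /andP[+ _].
elim: lam x => [|a l IH] [|x] //= sorted_al _ y0; first by rewrite nth_nil; lia.
have sorted_l : sorted geq l := path_sorted sorted_al.
have l_le_a : all (geq a) l.
  by apply: (order_path_min _ sorted_al) => u v w h1 h2; exact: leq_trans h2 h1.
have [ya|ay] /= := leqP y a.
  by case: x => [|x] /=; [rewrite ya; lia | rewrite add1n ltnS IH].
have -> : count (fun p => y <= p)%N l = 0%N.
  apply/eqP; rewrite -leqn0 leqNgt -has_count; apply/hasP => -[p pl yp].
  by move/allP: l_le_a => /(_ p pl) /=; lia.
case: x => [|x] /=; first lia.
have [xl|lx] := ltnP x (size l); last by rewrite nth_default //; lia.
by move/allP: l_le_a => /(_ _ (mem_nth 0%N xl)) /=; lia.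
Qed.

Lemma part_oversize lam s : (size lam < s)%N -> part lam s = 0%N.
Proof. by move=> h; rewrite /part nth_default //; lia. Qed.

Section PartitionCorners.
Variable lam : seq nat.
Hypothesis lam_partition : is_partition lam.

Lemma leq_partS s : (0 < s)%N -> (part lam s.+1 <= part lam s)%N.
Proof.
move=> s0; case e: (part lam s.+1) => [//|y].
have := leq_conj_part lam_partition (ltn0Sn s) (ltn0Sn y).
by rewrite e leqnn -(leq_conj_part lam_partition s0 (ltn0Sn y)); lia.
Qed.

Lemma convex_cornerE x y : convex_corner lam x y =
  [&& (0 < x)%N, (0 < y)%N, part lam x == y & (part lam x.+1 < y)%N].
Proof.
rewrite /convex_corner; case: (posnP x) => [//|x0]; case: (posnP y) => [//|y0] /=.
have := leq_conj_part lam_partition x0 y0.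
have := leq_conj_part lam_partition (ltn0Sn x) y0.
have := leq_conj_part lam_partition x0 (ltn0Sn y).
lia.
Qed.

Lemma concave_cornerE x y : concave_corner lam x y =
  [&& (0 < x)%N, y == (part lam x).+1 & (x == 1%N) || (part lam x < part lam x.-1)%N].
Proof.
rewrite /concave_corner; case: (posnP x) => [//|x0].
case: (posnP y) => [->|y0] /=; first by case: (part lam x).
have dual := leq_conj_part lam_partition x0 y0.
have dual_pred_x : (1 < x)%N -> (x.-1 <= conj_part lam y)%N = (y <= part lam x.-1)%N.
  by move=> x1; apply: leq_conj_part; lia.
have dual_pred_y : (1 < y)%N -> (x <= conj_part lam y.-1)%N = (y.-1 <= part lam x)%N.
  by move=> y1; apply: leq_conj_part; lia.
lia.
Qed.

End PartitionCorners.

Lemma has_colorSS n k i x y : has_color n k i x.+1 y.+1 = has_color n k i x y.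
Proof. by rewrite /has_color !addnS -(addn1 (k + x)) -(addn1 (i + y)) eqn_modDr. Qed.

Lemma has_color_succN n k i x y : (1 < n)%N ->
  has_color n k i x y -> ~~ has_color n k i x y.+1.
Proof.
rewrite /has_color => n_gt1 /eqP->.
by rewrite addnS -(addn1 (i + y)) -{1}(addn0 (i + y)) eqn_modDl mod0n modn_small.
Qed.

Lemma has_color_truncation n k i r : (i == r + k %[mod n])%N = has_color n k i r 0.
Proof. by rewrite /has_color addn0 eq_sym addnC. Qed.

Definition box_bound (lam : seq nat) : nat := (size lam + sumn lam + 1)%N.

Definition convex_row n k i lam x : bool :=
  [&& (0 < x)%N, (0 < part lam x)%N, (part lam x.+1 < part lam x)%N
    & has_color n k i x (part lam x)].

Definition concave_row n k i lam x : bool :=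
  [&& (0 < x)%N, (x == 1%N) || (part lam x < part lam x.-1)%N
    & has_color n k i x (part lam x).+1].

Section CornerRows.
Variables (R : Type) (idx : R) (op : Monoid.law idx).

Lemma big_corner_box_graph lam (f : nat -> nat) (P : pred nat) (G : nat * nat -> R) :
    (forall x, P x -> (x, f x) \in corner_box lam) ->
  \big[op/idx]_(p <- corner_box lam | (p.2 == f p.1) && P p.1) G p
    = \big[op/idx]_(1 <= x < (box_bound lam).+1 | P x) G (x, f x).
Proof.
move=> box_f; rewrite big_mkcond big_allpairs [RHS]big_mkcond /index_iota subSS subn0.
apply: eq_bigr => x _ /=; rewrite -big_mkcond /=.
have [Px|_] := boolP (P x); last by rewrite big_pred0 // => y; rewrite andbF.
under eq_bigl => y do rewrite andbT.
rewrite -big_filter filter_pred1_uniq ?iota_uniq ?big_seq1 //.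
by move: (box_f x Px); rewrite in_corner_box mem_iota; lia.
Qed.

Variables (n k i : nat) (lam : seq nat).
Hypothesis lam_partition : is_partition lam.

Lemma big_CV_rows (G : nat * nat -> R) :
  \big[op/idx]_(p <- CV n k i lam) G p
    = \big[op/idx]_(1 <= x < (box_bound lam).+1 | convex_row n k i lam x) G (x, part lam x).
Proof.
have CVE x y : convex_corner lam x y && has_color n k i x y
    = (y == part lam x) && convex_row n k i lam x.
  rewrite convex_cornerE // /convex_row.
  by case: eqVneq => [->|_]; rewrite ?eqxx -?andbA // !andbF.
rewrite /CV big_filter (eq_bigl _ _ (fun p => CVE p.1 p.2))
  (big_corner_box_graph (f := part lam)) // => x row_x.
by have := mem_CV n k i lam x (part lam x); rewrite CVE eqxx row_x mem_filter => /andP[].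
Qed.

Lemma big_CC_rows (G : nat * nat -> R) :
  \big[op/idx]_(p <- CC n k i lam) G p
    = \big[op/idx]_(1 <= x < (box_bound lam).+1 | concave_row n k i lam x) G (x, (part lam x).+1).
Proof.
have CCE x y : concave_corner lam x y && has_color n k i x y
    = (y == (part lam x).+1) && concave_row n k i lam x.
  rewrite concave_cornerE // /concave_row.
  by case: eqVneq => [->|_]; rewrite ?eqxx -?andbA // !andbF.
rewrite /CC big_filter (eq_bigl _ _ (fun p => CCE p.1 p.2))
  (big_corner_box_graph (f := fun x => (part lam x).+1)) // => x row_x.
by have := mem_CC n k i lam x (part lam x).+1; rewrite CCE eqxx row_x mem_filter => /andP[].
Qed.

End CornerRows.

Local Open Scope ring_scope.

Section SpectralParameters.
Variables (F : fieldType) (q d : F).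
Hypotheses (q_neq0 : q != 0) (d_neq0 : d != 0).

Lemma q1_neq0 : q1 q d != 0.
Proof. by rewrite /q1 mulf_neq0 ?invr_eq0. Qed.

Lemma q3_neq0 : q3 q d != 0.
Proof. by rewrite /q3 invr_eq0 mulf_neq0. Qed.

Lemma convex_corner_arg (w : F) (x y : nat) :
  q3 q d ^+ x * q1 q d ^+ y * q2 q * w
    = q1 q d ^ (y%:Z - 1) * q3 q d ^ (x%:Z - 1) * w.
Proof.
rewrite !expfzDr ?q1_neq0 ?q3_neq0 // !exprN1 -!exprnP /q2 /q1 /q3.
by field; rewrite q_neq0 d_neq0 oner_neq0.
Qed.

Lemma concave_corner_arg (w : F) (x y : nat) :
  q3 q d ^+ x * q1 q d ^+ y.+1 * q2 q ^+ 2 * w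
    = q1 q d ^ (y%:Z - 1) * q3 q d ^ (x%:Z - 2) * w.
Proof.
have -> : x%:Z - 2 = x%:Z - 1 - 1 by lia.
rewrite !expfzDr ?q1_neq0 ?q3_neq0 // !exprN1 -!exprnP exprS /q2 /q1 /q3.
by field; rewrite q_neq0 d_neq0 oner_neq0.
Qed.

End SpectralParameters.

Section Psi.
Variables (F : fieldType) (q : F).
Hypothesis q_neq0 : q != 0.

Lemma psi0 : psi q 0 = q.
Proof. by rewrite /psi mulr0 !subr0 invr1 mulr1. Qed.

(* [x != 1] is needed because [psi q 1 = 0] ([0^-1 = 0]). *)
Lemma psi_neq0 x : x != q ^+ 2 -> x != 1 -> psi q x != 0.
Proof.
move=> x_neq_q2 x_neq1; rewrite /psi mulf_neq0 ?invr_eq0 ?subr_eq0 1?eq_sym //.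
by apply: contra_neq x_neq_q2 => q_eq; rewrite expr2 -{2}q_eq mulVKf.
Qed.

Lemma psi_scaled_neq0 c u z : c != 0 -> u != 0 ->
  z != c * u / q ^+ 2 -> z != c * u -> psi q (c * (u / z)) != 0.
Proof.
move=> c_neq0 u_neq0 z_neq1 z_neq2.
have [->|z_neq0] := eqVneq z 0; first by rewrite invr0 !mulr0 psi0.
apply: psi_neq0.
  apply: contra_neq z_neq1 => <-; field.
  by rewrite c_neq0 u_neq0 z_neq0.
by apply: contra_neq z_neq2 => arg_eq1; rewrite -[LHS]mulr1 -arg_eq1; field.
Qed.

End Psi.

Section FockRows.
Variables (n k i : nat) (lam : seq nat) (r : nat).
Hypotheses (n_gt1 : (1 < n)%N) (lam_partition : is_partition lam)
  (r_oversize : (size lam < r)%N) (r_color : has_color n k i r 0).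

Lemma convex_row_bound x :
  convex_row n k i lam x -> (x < r)%N && (x < (box_bound lam).+1)%N.
Proof.
case/and4P=> _ lam_x_pos _ _.
have : (x <= size lam)%N by rewrite leqNgt; apply: contraTN lam_x_pos => /part_oversize ->.
by rewrite /box_bound; lia.
Qed.

Lemma concave_row_bound x :
  concave_row n k i lam x -> (x < r)%N && (x < (box_bound lam).+1)%N.
Proof.
case/and3P=> x_pos lam_x_drop x_color.
have x_le : (x <= (size lam).+1)%N.
  rewrite leqNgt; apply/negP => x_gt.
  by move: lam_x_drop; rewrite !part_oversize; lia.
have x_neq_r : x != r.
  apply: contraTneq x_color => ->; rewrite part_oversize //; exact: has_color_succN.
by rewrite /box_bound; lia.
Qed.

Lemma non_convex_row_flat s : (0 < s)%N ->
  has_color n k i s (part lam s) && ~~ convex_row n k i lam s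
    = has_color n k i s (part lam s) && (part lam s.+1 == part lam s).
Proof.
move=> s_pos; rewrite /convex_row s_pos; have := leq_partS lam_partition s_pos.
by case: has_color; rewrite /= ?andbT //; lia.
Qed.

Lemma non_concave_row_flat s : (0 < s)%N ->
  has_color n k i s.+1 (part lam s.+1).+1 && ~~ concave_row n k i lam s.+1
    = has_color n k i s (part lam s) && (part lam s.+1 == part lam s).
Proof.
move=> s_pos; have s1_neq1 : (s.+1 == 1)%N = false by lia.
rewrite /concave_row has_colorSS /= s1_neq1 /=; have := leq_partS lam_partition s_pos.
case: (eqVneq (part lam s.+1) (part lam s)) => [->|not_flat]; first by rewrite ltnn andbT.
by case: has_color; rewrite /= ?andbF ?andbT //; lia.
Qed.

Lemma last_row_not_flat :
  has_color n k i r.-1 (part lam r.-1) && (part lam r == part lam r.-1) = false.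
Proof.
rewrite [part lam r]part_oversize //.
case: eqVneq => [<-|]; rewrite ?andbF ?andbT //.
apply/negbTE; rewrite -has_colorSS prednK; first exact: has_color_succN.
by move: r_oversize; case: r.
Qed.

Variables (F : fieldType) (q d w : F).

Let num s := psi q (q1 q d ^ ((part lam s)%:Z - 1) * q3 q d ^ (s%:Z - 1) * w).
Let den s := psi q (q1 q d ^ ((part lam s)%:Z - 1) * q3 q d ^ (s%:Z - 2) * w).

Lemma fock_K_rows : fock_K q d n k i lam r w =
  \prod_(1 <= s < r | has_color n k i s (part lam s)) num s
    * \prod_(1 <= s < r | has_color n k i s (part lam s).+1) (den s)^-1.
Proof.
rewrite /fock_K; congr (_ * _); apply: eq_bigl => s;
  rewrite /has_color eq_sym [(s + k)%N]addnC ?addn1 ?addnS [(part lam s + i)%N]addnC //.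
Qed.

Lemma big_non_convex_rows :
  \prod_(1 <= s < r | has_color n k i s (part lam s) && ~~ convex_row n k i lam s) num s
    = \prod_(1 <= s < r.-1 | has_color n k i s (part lam s)
                                && (part lam s.+1 == part lam s)) num s.
Proof.
rewrite [RHS](big_nat_widen _ _ _ _ _ (leq_pred r)).
apply: eq_big_nat_cond => // s /andP[s_pos s_lt].
rewrite non_convex_row_flat //; have [_|s_ge] := ltnP s r.-1; first by rewrite andbT.
by rewrite andbF -last_row_not_flat; have -> : s = r.-1 by lia.
Qed.

Lemma den_num_flat s : part lam s.+1 = part lam s -> den s.+1 = num s.
Proof. by move=> flat; rewrite /den /num flat; congr (psi q (_ * _ ^ _ * w)); lia. Qed.

Lemma big_non_concave_rows :
  \prod_(1 <= s < r | has_color n k i s (part lam s).+1 && ~~ concave_row n k i lam s) den s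
    = \prod_(1 <= s < r.-1 | has_color n k i s (part lam s)
                                && (part lam s.+1 == part lam s)) num s.
Proof.
have [r_le1|r_gt1] := leqP r 1; first by rewrite !big_geq //; lia.
have first_row : has_color n k i 1 (part lam 1).+1 && ~~ concave_row n k i lam 1 = false.
  by rewrite /concave_row /=; case: has_color.
rewrite big_add1 /= big_ltn_cond; last by lia.
rewrite first_row.
apply: eq_big_nat_cond => s /andP[s_pos _]; first exact: non_concave_row_flat.
by rewrite non_concave_row_flat // => /andP[_ /eqP/den_num_flat].
Qed.

Lemma corner_K_rows : q != 0 -> d != 0 ->
  corner_K q d n k i lam w =
    \prod_(1 <= x < (box_bound lam).+1 | convex_row n k i lam x) num x
    * \prod_(1 <= x < (box_bound lam).+1 | concave_row n k i lam x) (den x)^-1.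
Proof.
move=> q_neq0 d_neq0; rewrite /corner_K big_CV_rows // big_CC_rows //.
by congr (_ * _); apply: eq_bigr => x _; rewrite /= ?convex_corner_arg ?concave_corner_arg.
Qed.

Lemma fock_K_corner_K : q != 0 -> d != 0 ->
    (forall s, (1 <= s < r.-1)%N -> num s != 0) ->
  fock_K q d n k i lam r w = corner_K q d n k i lam w.
Proof.
move=> q_neq0 d_neq0 num_neq0.
pose flat := \prod_(1 <= s < r.-1 | has_color n k i s (part lam s)
                                     && (part lam s.+1 == part lam s)) num s.
have flat_neq0 : flat != 0.
  rewrite prodf_seq_neq0; apply/allP => s; rewrite mem_index_iota => s_range.
  by apply/implyP => _; exact: num_neq0.
have convex_rows : \prod_(1 <= s < r | has_color n k i s (part lam s)
                                       && convex_row n k i lam s) num s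
    = \prod_(1 <= x < (box_bound lam).+1 | convex_row n k i lam x) num x.
  rewrite (eq_bigl (convex_row n k i lam)); last by move=> s; apply: andb_idl => /and4P[].
  exact: big_nat_cond_bound convex_row_bound.
have concave_rows : \prod_(1 <= s < r | has_color n k i s (part lam s).+1
                                        && concave_row n k i lam s) (den s)^-1
    = \prod_(1 <= x < (box_bound lam).+1 | concave_row n k i lam x) (den x)^-1.
  rewrite (eq_bigl (concave_row n k i lam)); last by move=> s; apply: andb_idl => /and3P[].
  exact: big_nat_cond_bound concave_row_bound.
rewrite fock_K_rows corner_K_rows // (bigID (convex_row n k i lam))
  [X in _ * X](bigID (concave_row n k i lam)) /= convex_rows concave_rows.
by rewrite !prodfV big_non_convex_rows big_non_concave_rows -/flat mulrACA mulfV ?mulr1.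
Qed.

End FockRows.

Lemma corner_K0 (F : fieldType) (q d : F) n k i lam : q != 0 ->
  corner_K q d n k i lam 0 = q ^ ((size (CV n k i lam))%:Z - (size (CC n k i lam))%:Z).
Proof.
move=> q_neq0; rewrite /corner_K.
under eq_bigr => p _ do rewrite mulr0 psi0.
under [X in _ * X]eq_bigr => p _ do rewrite mulr0 psi0.
by rewrite !prodr_const_seq expfzDr // -invr_expz -!exprnP exprVn.
Qed.

Unset Implicit Arguments.

Theorem mainTheorem4 (R : realType) (n : nat) (q d u : R[i]) (k i : 'I_n)
    (lam : seq nat) (r : nat) :
  (3 <= n)%N -> q != 0 -> d != 0 -> generic_params q d -> u != 0 ->
  is_partition lam ->
  (size lam < r)%N -> (i == r + k %[mod n])%N ->
  (exists S : seq R[i], forall z : R[i], z \notin S ->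
      fock_K q d n k i lam r (u / z) = corner_K q d n k i lam (u / z))
  /\
  fock_K q d n k i lam r 0
    = q ^ ((size (CV n k i lam))%:Z - (size (CC n k i lam))%:Z).
Proof.
(* The identity holds for all nonzero [q] and [d]. *)
move=> n_ge3 q_neq0 d_neq0 _ u_neq0 lam_partition r_oversize.
rewrite has_color_truncation => r_color; have n_gt1 : (1 < n)%N by lia.
pose c t := q1 q d ^ ((part lam t)%:Z - 1) * q3 q d ^ (t%:Z - 1).
have c_neq0 t : c t != 0 by rewrite mulf_neq0 // expfz_neq0 ?q1_neq0 ?q3_neq0.
split; last by rewrite fock_K_corner_K ?corner_K0 // => t _; rewrite mulr0 psi0.
exists ([seq c t * u / q ^+ 2 | t <- iota 0 r] ++ [seq c t * u | t <- iota 0 r]).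
move=> z z_notin; apply: fock_K_corner_K => // t /andP[_ t_lt].
have t_in : t \in iota 0 r by rewrite mem_iota; lia.
apply: (psi_scaled_neq0 q_neq0 (c_neq0 t) u_neq0);
  apply: contraNneq z_notin => ->; rewrite mem_cat.
  by rewrite (map_f (fun t => c t * u / q ^+ 2)).
by rewrite (map_f (fun t => c t * u)) ?orbT.
Qed.
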